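(* Let $\{Q_\zeta\}_{\zeta}$ be a family of Markov kernels on $\mathsf X$ and let $P_\zeta$ and $\tilde P_\zeta$ be the Markov kernels induced by the AI-CPF with proposal $Q_\zeta$, as defined in the context. Then for all $\zeta,\zeta'$, \[ d(P_\zeta,P_{\zeta'})\le N\,d(Q_\zeta,Q_{\zeta'})\quad\text{and}\quad d(\tilde P_\zeta,\tilde P_{\zeta'})\le N\,d(Q_\zeta,Q_{\zeta'}). \]
   Context: For a finite signed measure $\xi$, $\|\xi\|_{\mathrm{tv}}=\sup_{\|f\|_\infty\le1}\xi(f)$; for Markov kernels $P,P'$, $d(P,P')=\sup_x\|P(x,\cdot)-P'(x,\cdot)\|_{\mathrm{tv}}$. Model: $\pi(\mathrm{d}x_{1:T})\propto M_1(\mathrm{d}x_1)G_1(x_1)\prod_{k=2}^TM_k(x_{k-1},\mathrm{d}x_k)G_k(x_{1:k})$ on $\mathsf X^T$ (with $G_k(x_{1:k})=G_k(x_{k-1},x_k)$ and $M_k$ having densities when backward sampling is used). F-CPF$(x^*_{2:T},X_1^{(1:N)})$ with $N$ particles: set $\mathbf X_1^{(i)}=X_1^{(i)}$; for $k=1,\dots,T-1$: normalised weights $W_k^{(i)}\propto G_k(\mathbf X_k^{(i)})$; $A_k^{(2:N)}$ i.i.d. categorical$(W_k^{(1:N)})$, $A_k^{(1)}=1$; $X_{k+1}^{(i)}\sim M_{k+1}(X_k^{(A_k^{(i)})},\cdot)$ for $i\ge2$, $X_{k+1}^{(1)}=x^*_{k+1}$; $\mathbf X_{k+1}^{(i)}=(\mathbf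 X_k^{(A_k^{(i)})},X_{k+1}^{(i)})$; finally $W_T^{(i)}\propto G_T(\mathbf X_T^{(i)})$. Path selection either by ancestor tracing ($B_T\sim\mathrm{Categ}(W_T)$, $B_k=A_k^{(B_{k+1})}$, $V^{(1:N)}=W_1^{(1:N)}$) or backward sampling ($B_T\sim\mathrm{Categ}(W_T)$, $B_k\sim\mathrm{Categ}(V_k)$ with $V_k^{(i)}\propto W_k^{(i)}M_{k+1}(X_k^{(i)},X_{k+1}^{(B_{k+1})})G_{k+1}(X_k^{(i)},X_{k+1}^{(B_{k+1})})$, $V^{(1:N)}=V_1^{(1:N)}$). AI-CPF$(x^*_{1:T};Q_\zeta)$: draw $X_0\sim Q_\zeta(x^*_1,\cdot)$; draw $X_1^{(2:N)}$ i.i.d. $\sim Q_\zeta(X_0,\cdot)$, set $X_1^{(1)}=x^*_1$; run F-CPF and path selection. $P_\zeta$ is the Markov kernel from $x^*_{1:T}$ to $(X_1^{(B_1)},\dots,X_T^{(B_T)})$; $\tilde P_\zeta$ (with backward sampling) is the Markov kernel from $(x^*_{1:T},\cdot)$ to $\big((X_1^{(B_1)},\dots,X_T^{(B_T)}),(B_1,V^{(1:N)},X_1^{(1:N)})\big)$. *)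

From HB Require Import structures.
From mathcomp Require Import all_boot all_order all_algebra.
From mathcomp Require Import all_classical all_reals.
From mathcomp Require Import all_analysis measurable_realfun.
Set Implicit Arguments.
Unset Strict Implicit.
Unset Printing Implicit Defensive.
Import Order.TTheory GRing.Theory Num.Theory.
Local Open Scope classical_set_scope.
Local Open Scope ring_scope.

(* Markov kernels are represented by their action on test functions:        *)
(* i.e. a random variable with values in A is represented by the map        *)
(* f |-> E[f(output)].  This is the continuation (integration) monad; a     *)
(* sampling step from a measure mu is f |-> \int[mu]_x f x.                 *)
Definition prog (R : realType) (A : Type) := (A -> \bar R) -> \bar R.

Definition pret {R : realType} {A} (a : A) : prog R A := fun k => k a.
Definition pbind {R : realType} {A B} (p : prog R A) (f : A -> prog R B) : prog R B :=
  fun k => p (fun a => f a k).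
Definition psample {R : realType} {d} {X : measurableType d}
  (mu : {measure set X -> \bar R}) : prog R X :=
  fun k => (\int[mu]_x k x)%E.
(* Categ(w(0), ..., w(N-1)) on {0,...,N-1} (particle indices are 0-based: *)
(* index 0 is the paper's particle 1, the reference particle).           *)
Definition pcateg {R : realType} (N : nat) (w : nat -> R) : prog R nat :=
  fun k => (\sum_(0 <= i < N) (w i)%:E * k i)%E.
Fixpoint piid {R : realType} {A} (n : nat) (p : prog R A) : prog R (seq A) :=
  match n with
  | 0 => pret [::]
  | n'.+1 => pbind p (fun a => pbind (piid n' p) (fun s => pret (a :: s)))
  end.

Definition tv_dist {R : realType} {d} {Y : measurableType d}
  (mu nu : prog R Y) : \bar R :=
  ereal_sup [set (mu (fun y => (f y)%:E) - nu (fun y => (f y)%:E))%E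
            | f in [set f : Y -> R | measurable_fun setT f /\
                                     forall y, `|f y| <= 1]].

Definition kdist {R : realType} {d d'} {Z : measurableType d} {Y : measurableType d'}
  (P P' : Z -> prog R Y) : \bar R :=
  ereal_sup [set tv_dist (P z) (P' z) | z in setT].

Definition kprog {R : realType} {d d'} {Z : measurableType d} {X : measurableType d'}
  (Q : Z -> probability X R) : Z -> prog R X := fun z => psample (Q z).

Definition markov_kernel {R : realType} {d d'} {Z : measurableType d} {X : measurableType d'}
  (Q : Z -> probability X R) : Prop :=
  forall A, measurable A -> measurable_fun [set: Z] (Q ^~ A).

Section CPF.
Context {R : realType} {d : measure_display} {X : measurableType d}.
Variables (N T : nat).
(* M k : the Markov kernel M_k (k = 2..T), G k : the potential G_k acting on
   paths x_{1:k} given as lists [:: x_1; ...; x_k]. *)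
Variables (M : nat -> X -> probability X R) (G : nat -> seq X -> R).

(* state after time k:
   (hx, ha, hp) with hx = [:: X_1; ...; X_k]   (particle arrays),
                     ha = [:: A_1; ...; A_(k-1)] (ancestor arrays),
                     hp = [:: P_1; ...; P_k]   (P_j i = path bold-X_j^(i)). *)
Definition state := (seq (nat -> X) * seq (nat -> nat) * seq (nat -> seq X))%type.

Definition wts (k : nat) (P : nat -> seq X) (i : nat) : R :=
  G k (P i) / \sum_(0 <= j < N) G k (P j).

Definition nullX : nat -> X := fun _ => point.
Definition nullP : nat -> seq X := fun _ => [::].

(* one step k -> k+1 of the F-CPF, with reference x*_{k+1} = nth xstar k *)
Definition fstep (xstar : seq X) (k : nat) (st : state) : prog R state :=
  let: (hx, ha, hp) := st in
  let Xk := last nullX hx in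
  let Pk := last nullP hp in
  pbind (piid N.-1 (pbind (pcateg N (wts k Pk)) (fun a =>
                    pbind (psample (M k.+1 (Xk a))) (fun x => pret (a, x)))))
   (fun dr =>
      let A i := if i == 0%N then 0%N else (nth (0%N, point) dr i.-1).1 in
      let Xn i := if i == 0%N then nth point xstar k
                  else (nth (0%N, point) dr i.-1).2 in
      pret (rcons hx Xn, rcons ha A, rcons hp (fun i => rcons (Pk (A i)) (Xn i)))).

(* forward pass of the F-CPF up to time m+1 *)
Fixpoint fwd (xstar : seq X) (X1 : nat -> X) (m : nat) : prog R state :=
  match m with
  | 0 => pret ([:: X1], [::], [:: fun i => [:: X1 i]])
  | m'.+1 => pbind (fwd xstar X1 m') (fstep xstar m'.+1)
  end.

(* output of path selection: (selected path, (B_1, (V^(1:N), X_1^(1:N)))) *)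
Definition aux_out := (nat * (N.-tuple R * N.-tuple X))%type.
Definition out := (T.-tuple X * aux_out)%type.

Definition mk_out (hx : seq (nat -> X)) (Bs : seq nat) (V : nat -> R) : out :=
  ([tuple (nth nullX hx i) (nth 0%N Bs i) | i < T],
   (head 0%N Bs, ([tuple V i | i < N], [tuple head nullX hx i | i < N]))).

(* ancestor tracing: from [:: A_(T-1); ...; A_1] and B_T, the list
   [:: B_1; ...; B_T] with B_k = A_k^(B_(k+1)) *)
Fixpoint trace (rha : seq (nat -> nat)) (b : nat) : seq nat :=
  match rha with
  | [::] => [:: b]
  | A :: r => rcons (trace r (A b)) b
  end.

Definition sel_at (st : state) : prog R out :=
  let: (hx, ha, hp) := st in
  pbind (pcateg N (wts T (last nullP hp))) (fun bT =>
    pret (mk_out hx (trace (rev ha) bT) (wts 1 (head nullP hp)))).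

(* backward sampling, with M_k(x, dy) = m k x y nu(dy) and
   G_k(x_{1:k}) = g k x_{k-1} x_k *)
Variables (m g : nat -> X -> X -> R).

Definition vwts (st : state) (k : nat) (bn : nat) (i : nat) : R :=
  let: (hx, ha, hp) := st in
  let Xk := nth nullX hx k.-1 in
  let Xk1 := nth nullX hx k in
  let u j := wts k (nth nullP hp k.-1) j * m k.+1 (Xk j) (Xk1 bn)
                                        * g k.+1 (Xk j) (Xk1 bn) in
  u i / \sum_(0 <= j < N) u j.

(* draws B_j, ..., B_1 given B_(j+1) = bn; returns [:: (B_1,V_1); ...; (B_j,V_j)] *)
Fixpoint bwd (st : state) (j : nat) (bn : nat) : prog R (seq (nat * (nat -> R))) :=
  match j with
  | 0 => pret [::]
  | j'.+1 => let V := vwts st j'.+1 bn in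
      pbind (pcateg N V) (fun b =>
        pbind (bwd st j' b) (fun r => pret (rcons r (b, V))))
  end.

(* (convention: when T = 1, V_T := W_T, the law of B_T) *)
Definition sel_bs (st : state) : prog R out :=
  let: (hx, ha, hp) := st in
  let WT := wts T (last nullP hp) in
  pbind (pcateg N WT) (fun bT =>
    pbind (bwd st T.-1 bT) (fun r =>
      let full := rcons r (bT, WT) in
      pret (mk_out hx (map fst full) (head (0%N, WT) full).2))).

Definition aicpf (bs : bool) (Q : X -> probability X R) (xstar : seq X) : prog R out :=
  let x1 := nth point xstar 0 in
  pbind (psample (Q x1)) (fun x0 =>
  pbind (piid N.-1 (psample (Q x0))) (fun xs =>
    let X1 i := if i == 0%N then x1 else nth point xs i.-1 in
    pbind (fwd xstar X1 T.-1) (fun st =>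
      if bs then sel_bs st else sel_at st))).

Definition P_aicpf (bs : bool) (Q : X -> probability X R) :
  T.-tuple X -> prog R (T.-tuple X) :=
  fun xstar => pbind (aicpf bs Q xstar) (fun o => pret o.1).

Definition Ptilde_aicpf (Q : X -> probability X R) : out -> prog R out :=
  fun z => aicpf true Q z.1.

End CPF.

Arguments P_aicpf {R d X} N T M G m g bs Q _ _.
Arguments Ptilde_aicpf {R d X} N T M G m g Q _ _.

From HB Require Import structures.
From mathcomp Require Import all_boot all_order all_algebra.
From mathcomp Require Import all_classical all_reals.
From mathcomp Require Import all_analysis measurable_realfun.
From mathcomp Require Import lra.
Import Order.TTheory GRing.Theory Num.Theory.
Set Implicit Arguments.
Unset Strict Implicit.
Unset Printing Implicit Defensive.
Local Open Scope classical_set_scope.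
Local Open Scope ring_scope.

(* The AI-CPF first draws X_0 ~ Q(x*_1, .) and then the N - 1
   free initial particles i.i.d. from Q(X_0, .); everything that follows
   (forward pass and path selection) is a Markov kernel K that does not
   involve Q.  So for a test function f with |f| <= 1, the output of P_Q on f
   is  \int Q(x*_1, dx_0) \int Q(x_0, .)^{(N-1)} (K f),  and replacing the N
   draws from Q by draws from Q' one at a time changes this value by at most
   d(Q, Q') each time. *)

Section prob_kernel.
Context {R : realType} {d dY} {X : measurableType d} {Y : measurableType dY}.
Variable mu : X -> probability Y R.

(* The measurability proof is an argument so that the instances below can be
   attached to the constant. *)
Definition prob_kernel (_ : forall U, measurable U -> measurable_fun setT (mu ^~ U)) :
  X -> {measure set Y -> \bar R} := fun x => mu x.

Variable mmu : forall U, measurable U -> measurable_fun setT (mu ^~ U).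

HB.instance Definition _ := isKernel.Build _ _ X Y R (prob_kernel mmu) mmu.

Lemma prob_kernel_uub : measure_fam_uub (prob_kernel mmu).
Proof. by exists 2%R => x; rewrite /prob_kernel /= probability_setT lte_fin; lra. Qed.

HB.instance Definition _ :=
  Kernel_isFinite.Build _ _ X Y R (prob_kernel mmu) prob_kernel_uub.

End prob_kernel.

(** * Bounded measurable programs *)

(* A predicate on families [W -> A] indexed by measurable spaces.  It stands
   for a measurable structure on types that carry none, such as lists of
   particles or the state of the particle filter. *)
Definition param_pred (A : Type) := forall d (W : measurableType d), (W -> A) -> Prop.

Definition measurable_param d' (X : measurableType d') : param_pred X :=
  fun d W u => measurable_fun setT u.
Arguments measurable_param {d'} X _ _ _ /.

Definition precomp_closed A (P : param_pred A) :=
  forall d (W : measurableType d) d' (W' : measurableType d') (h : W' -> W) (u : W -> A),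
    measurable_fun setT h -> P d W u -> P d' W' (u \o h).

Lemma measurable_param_closed d' (X : measurableType d') :
  precomp_closed (measurable_param X).
Proof. by move=> d W d0 W' h u mh mu; exact: measurableT_comp. Qed.

Definition seq_param d' (A : measurableType d') n : param_pred (seq A) :=
  fun d W u => (forall w, size (u w) = n) /\
               forall a0 i, measurable_fun setT (fun w => nth a0 (u w) i).
Arguments seq_param {d'} A n _ _ _ /.

Lemma seq_param_closed d' (A : measurableType d') n : precomp_closed (seq_param A n).
Proof.
move=> d W d0 W' h u mh [hs hm]; split=> [w|a0 i]; first exact: hs.
exact: measurableT_comp (hm a0 i) mh.
Qed.

Section bounded_programs.
Context {R : realType}.
Local Open Scope ereal_scope.

Definition bounded_test A (P : param_pred A) dZ (Z : measurableType dZ)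
    (k : Z -> A -> \bar R) :=
  forall d (W : measurableType d) (g : W -> Z) (u : W -> A),
    measurable_fun setT g -> P d W u ->
    measurable_fun setT (fun w => k (g w) (u w)) /\ (forall w, `|k (g w) (u w)| <= 1).

Definition bounded_prog A (P : param_pred A) dY (Y : measurableType dY)
    (p : Y -> prog R A) :=
  forall dZ (Z : measurableType dZ) (k : Z -> A -> \bar R), bounded_test P k ->
    measurable_fun setT (fun zy : Z * Y => p zy.2 (k zy.1)) /\
    (forall z y, `|p y (k z)| <= 1).

Definition bounded_cont A B (P : param_pred A) (Q : param_pred B) dY
    (Y : measurableType dY) (f : Y -> A -> prog R B) :=
  forall d (W : measurableType d) (g : W -> Y) (u : W -> A),
    measurable_fun setT g -> P d W u -> bounded_prog Q (fun w => f (g w) (u w)).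

Lemma bounded_prog_comp A (P : param_pred A) dY (Y : measurableType dY)
    dY' (Y' : measurableType dY') (p : Y -> prog R A) (h : Y' -> Y) :
  measurable_fun setT h -> bounded_prog P p -> bounded_prog P (p \o h).
Proof.
move=> mh hp dZ Z k hk; have [mp bp] := hp _ _ _ hk; split=> [|z y]; last exact: bp.
have -> : (fun zy : Z * Y' => (p \o h) zy.2 (k zy.1)) =
  (fun zy : Z * Y => p zy.2 (k zy.1)) \o (fun zy : Z * Y' => (zy.1, h zy.2)) by [].
apply: (measurableT_comp mp); apply: measurable_fun_pair; first exact: measurable_fst.
exact: measurableT_comp mh measurable_snd.
Qed.

Lemma bounded_prog_ret A (P : param_pred A) dY (Y : measurableType dY) (u : Y -> A) :
  precomp_closed P -> P _ _ u -> bounded_prog P (fun y => pret (u y)).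
Proof.
move=> hP hu dZ Z k hk.
have [mk bk] := hk _ (Z * Y)%type fst (u \o snd) measurable_fst
  (hP _ _ _ _ snd u measurable_snd hu).
by split=> // z y; exact: (bk (z, y)).
Qed.

Lemma bounded_prog_bind A B (P : param_pred A) (Q : param_pred B) dY
    (Y : measurableType dY) (p : Y -> prog R A) (f : Y -> A -> prog R B) :
  bounded_prog P p -> bounded_cont P Q f -> bounded_prog Q (fun y => pbind (p y) (f y)).
Proof.
move=> hp hf dZ Z k hk.
pose k' (zy : Z * Y) a := f zy.2 a (k zy.1).
have hk' : bounded_test P k'.
  move=> d W g u mg hu.
  have [mf bf] := hf _ _ (snd \o g) u (measurableT_comp measurable_snd mg) hu _ _ k hk.
  split=> [|w]; last exact: (bf (g w).1 w).
  have -> : (fun w => k' (g w) (u w)) =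
    (fun zw : Z * W => f (g zw.2).2 (u zw.2) (k zw.1)) \o (fun w => ((g w).1, w)) by [].
  apply: (measurableT_comp mf); apply: measurable_fun_pair => //.
  exact: measurableT_comp measurable_fst mg.
have [mp bp] := hp _ _ _ hk'.
split=> [|z y]; last exact: (bp (z, y) y).
have -> : (fun zy : Z * Y => pbind (p zy.2) (f zy.2) (k zy.1)) =
  (fun zy : (Z * Y) * Y => p zy.2 (k' zy.1)) \o (fun zy => (zy, zy.2)) by [].
by apply: (measurableT_comp mp); apply: measurable_fun_pair.
Qed.

Lemma bounded_prog_sections A (P : param_pred A) dY (Y : measurableType dY)
    dZ (Z : measurableType dZ) (p : Y -> prog R A) (k : Z -> A -> \bar R) :
  bounded_prog P p -> bounded_test P k ->
  [/\ forall z, measurable_fun setT (fun y => p y (k z)),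
      forall y, measurable_fun setT (fun z => p y (k z)) &
      forall z y, `|p y (k z)| <= 1].
Proof.
move=> hp hk; have [mp bp] := hp _ _ _ hk; split=> // [z|y].
  have -> : (fun y => p y (k z)) = (fun zy : Z * Y => p zy.2 (k zy.1)) \o pair z by [].
  by apply: (measurableT_comp mp); apply: measurable_fun_pair => //; exact: measurable_cst.
have -> : (fun z => p y (k z)) = (fun zy : Z * Y => p zy.2 (k zy.1)) \o (pair^~ y) by [].
by apply: (measurableT_comp mp); apply: measurable_fun_pair => //; exact: measurable_cst.
Qed.

Lemma abse_le_fin_num (x : \bar R) (c : R) : `|x| <= c%:E -> x \is a fin_num.
Proof. by case: x. Qed.

Lemma bounded_integrable d' (X : measurableType d') (mu : probability X R)
    (h : X -> \bar R) (c : R) :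
  measurable_fun setT h -> (forall x, `|h x| <= c%:E) ->
  mu.-integrable setT h /\ `|\int[mu]_x h x| <= c%:E.
Proof.
move=> mh hc.
have hI : \int[mu]_x `|h x| <= c%:E.
  apply: (@le_trans _ _ (\int[mu]_x (cst c%:E) x)).
    by apply: ge0_le_integral => //; apply: measurableT_comp.
  by rewrite integral_cst // (_ : _ [set: X] = 1) ?mule1 //; exact: probability_setT.
split; first by apply/integrableP; split => //; exact: le_lt_trans hI (ltry _).
exact: le_trans (le_abse_integral _ _ mh) hI.
Qed.

Lemma bounded_prog_sample d' (X : measurableType d') dY (Y : measurableType dY)
    (mu : Y -> probability X R) :
  (forall U, measurable U -> measurable_fun setT (mu ^~ U)) ->
  bounded_prog (measurable_param X) (fun y => psample (mu y)).
Proof.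
move=> mmu dZ Z k hk.
have [mk _] := hk _ ((Z * Y) * X)%type (fst \o fst) snd
  (measurableT_comp measurable_fst measurable_fst) measurable_snd.
have mnu U : measurable U -> measurable_fun setT ((fun zy : Z * Y => mu zy.2) ^~ U).
  by move=> mU; exact: measurableT_comp (mmu U mU) measurable_snd.
split=> [|z y]; last first.
  have [mkz bkz] := hk _ X (cst z) id (measurable_cst _) (@measurable_id _ _ setT).
  by have [] := bounded_integrable (mu y) mkz bkz.
pose kw (w : (Z * Y) * X) := k w.1.1 w.2.
have -> : (fun zy : Z * Y => psample (mu zy.2) (k zy.1)) =
    (fun zy => \int[prob_kernel mnu zy]_x kw^\+ (zy, x)
             - \int[prob_kernel mnu zy]_x kw^\- (zy, x)).
  apply/funext => zy; rewrite /psample integralE.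
  by congr (_ - _); apply: eq_integral => x _; rewrite ?funeposE ?funenegE.
apply: emeasurable_funB.
  exact: measurable_fun_integral_finite_kernel _ (prob_kernel mnu)
    (fun w => funepos_ge0 _ w) (measurable_funepos mk).
exact: measurable_fun_integral_finite_kernel _ (prob_kernel mnu)
  (fun w => funeneg_ge0 _ w) (measurable_funeneg mk).
Qed.

End bounded_programs.

(** * Total variation bounds for i.i.d. sampling *)

Section sampling.
Context {R : realType}.
Local Open Scope ereal_scope.

Lemma abse_pcateg_le n (w : nat -> R) (k : nat -> \bar R) :
  (forall i, (0 <= w i)%R) -> (forall i, `|k i| <= 1) ->
  `|pcateg n w k| <= (\sum_(0 <= i < n) w i)%:E.
Proof.
move=> w0 k1; rewrite /pcateg; elim: n => [|n IH]; first by rewrite !big_geq // abse0.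
rewrite !big_nat_recr //= EFinD; apply: le_trans (lee_abs_add _ _) _.
apply: leeD => //; rewrite abseM gee0_abs ?lee_fin //.
by rewrite -[X in _ <= X]mule1; apply: lee_pmul; rewrite ?lee_fin.
Qed.

Lemma bounded_prog_categ dY (Y : measurableType dY) n (w : Y -> nat -> R) :
  (forall i, measurable_fun setT (fun y => w y i)) -> (forall y i, (0 <= w y i)%R) ->
  (forall y, (\sum_(0 <= i < n) w y i <= 1)%R) ->
  bounded_prog (measurable_param nat) (fun y => pcateg n (w y)).
Proof.
move=> mw w0 w1 dZ Z k hk.
have hki i := hk _ Z id (cst i) (@measurable_id _ _ setT) (measurable_cst _).
split=> [|z y].
  apply: emeasurable_sum => i; apply: emeasurable_funM.
    by apply/measurable_EFinP; exact: measurableT_comp (mw i) measurable_snd.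
  exact: measurableT_comp (hki i).1 measurable_fst.
apply: le_trans (abse_pcateg_le n (w0 y) (fun i => (hki i).2 z)) _.
by rewrite lee_fin.
Qed.

Lemma bounded_prog_iid d' (A : measurableType d') n dY (Y : measurableType dY)
    (p : Y -> prog R A) :
  bounded_prog (measurable_param A) p ->
  bounded_prog (seq_param A n) (fun y => piid n (p y)).
Proof.
elim: n dY Y p => [|n IH] dY Y p hp.
  apply: (bounded_prog_ret (u := fun _ => [::]) (@seq_param_closed _ A 0)).
  by split=> // a0 i; exact: measurable_cst.
apply: (bounded_prog_bind hp) => dW W g a mg ma.
apply: (bounded_prog_bind (IH _ _ _ (bounded_prog_comp mg hp))).
move=> dW' W' g' s mg' [hs hm].
apply: (bounded_prog_ret (@seq_param_closed _ A n.+1)).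
split=> [w /=|a0 [|i] /=]; first by rewrite hs.
  exact: measurableT_comp ma mg'.
exact: hm.
Qed.

Definition tv_le d' (X : measurableType d') (mu1 mu2 : probability X R) (dl : R) :=
  forall f : X -> R, measurable_fun setT f -> (forall x, (`|f x| <= 1)%R) ->
    \int[mu1]_x (f x)%:E - \int[mu2]_x (f x)%:E <= dl%:E.

Lemma tv_le_abse d' (X : measurableType d') (mu1 mu2 : probability X R) dl
    (h : X -> \bar R) :
  tv_le mu1 mu2 dl -> measurable_fun setT h -> (forall x, `|h x| <= 1) ->
  `|\int[mu1]_x h x - \int[mu2]_x h x| <= dl%:E.
Proof.
move=> htv mh hb.
pose f x := fine (h x).
have hf x : h x = (f x)%:E by rewrite /f fineK //; exact: abse_le_fin_num (hb x).
have mf : measurable_fun setT f.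
  by apply/measurable_EFinP; rewrite (_ : EFin \o f = h) //; apply/funext => x /=.
have bf x : (`|f x| <= 1)%R by rewrite -lee_fin -abse_EFin -hf.
have mfN : measurable_fun setT (fun x => - f x)%R by exact: measurableT_comp mf.
have bfN x : (`|(- f x)%R| <= 1)%R by rewrite normrN.
have mfE : measurable_fun setT (fun x => (f x)%:E) by apply/measurable_EFinP.
have bfE x : `|(f x)%:E| <= 1%:E by rewrite abse_EFin lee_fin.
have intN (mu : probability X R) : \int[mu]_x (- f x)%:E = - \int[mu]_x (f x)%:E.
  rewrite -mulN1e -integralZl ?(bounded_integrable mu mfE bfE).1 //.
  by apply: eq_integral => x _; rewrite -EFinM mulN1r.
have fin1 := abse_le_fin_num (bounded_integrable mu1 mfE bfE).2.
have fin2 := abse_le_fin_num (bounded_integrable mu2 mfE bfE).2.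
have -> : \int[mu1]_x h x = \int[mu1]_x (f x)%:E by apply: eq_integral => x _.
have -> : \int[mu2]_x h x = \int[mu2]_x (f x)%:E by apply: eq_integral => x _.
have := htv _ mf bf; have := htv _ mfN bfN; rewrite !intN.
rewrite -(fineK fin1) -(fineK fin2) -!EFinN -!EFinB abse_EFin !lee_fin => hN hP.
by rewrite ler_norml; apply/andP; split; lra.
Qed.

Lemma tv_le_integral_dist d' (X : measurableType d') (mu1 mu2 : probability X R) dl c
    (h1 h2 : X -> \bar R) :
  tv_le mu1 mu2 dl -> measurable_fun setT h1 -> measurable_fun setT h2 ->
  (forall x, `|h1 x| <= 1) -> (forall x, `|h2 x| <= 1) ->
  (forall x, `|h1 x - h2 x| <= c%:E) ->
  `|\int[mu1]_x h1 x - \int[mu2]_x h2 x| <= (c + dl)%:E.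
Proof.
move=> htv m1 m2 b1 b2 hc.
have [i11 b11] := bounded_integrable mu1 m1 b1.
have [i12 b12] := bounded_integrable mu1 m2 b2.
have [_ b22] := bounded_integrable mu2 m2 b2.
have := (bounded_integrable mu1 (emeasurable_funB m1 m2) hc).2.
rewrite integralB // => hd.
have ht := tv_le_abse htv m2 b2.
move: (abse_le_fin_num b11) (abse_le_fin_num b12) (abse_le_fin_num b22) hd ht.
set a := \int[mu1]_x h1 x; set b := \int[mu1]_x h2 x; set e := \int[mu2]_x h2 x.
move=> fa fb fe; rewrite -(fineK fa) -(fineK fb) -(fineK fe) -!EFinB !abse_EFin !lee_fin.
by move=> hd ht; apply: le_trans (ler_distD (fine b) _ _) _; exact: lerD.
Qed.

Lemma tv_le_iid d' (X : measurableType d') (mu1 mu2 : probability X R) dl n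
    (phi : seq X -> \bar R) :
  tv_le mu1 mu2 dl -> bounded_test (seq_param X n) (fun _ : unit => phi) ->
  `|piid n (psample mu1) phi - piid n (psample mu2) phi| <= (n%:R * dl)%:E.
Proof.
move=> htv; elim: n phi => [|n IH] phi hphi.
  have nil_param : seq_param X 0 _ unit (fun _ => [::]).
    by split=> // a0 i; exact: measurable_cst.
  have [_ b] := hphi _ unit id _ (@measurable_id _ _ setT) nil_param.
  by rewrite /= subee ?mul0r ?abse0 //; exact: abse_le_fin_num (b tt).
pose ka (a : X) (s : seq X) := phi (a :: s).
have hka : bounded_test (seq_param X n) ka.
  move=> dW W g u mg [hs hm].
  apply: hphi (fun _ => tt) (fun w => g w :: u w) (measurable_cst _) _.
  by split=> [w /=|a0 [|i] /=]; [rewrite hs | exact: mg | exact: hm].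
have iid_bounded (mu : probability X R) :
    bounded_prog (seq_param X n) (fun _ : unit => piid n (psample mu)).
  apply: (bounded_prog_iid (p := fun _ : unit => psample mu)).
  by apply: bounded_prog_sample => U mU; exact: measurable_cst.
have [_ m1 b1] := bounded_prog_sections (iid_bounded mu1) hka.
have [_ m2 b2] := bounded_prog_sections (iid_bounded mu2) hka.
have hc a : `|piid n (psample mu1) (ka a) - piid n (psample mu2) (ka a)|
    <= (n%:R * dl)%:E.
  by apply: IH => dW W g u mg hu; exact: hka _ W (fun _ => a) u (measurable_cst _) hu.
have := tv_le_integral_dist htv (m1 tt) (m2 tt) (b1 ^~ tt) (b2 ^~ tt) hc.
by rewrite -[n.+1%:R]natr1 mulrDl mul1r.
Qed.

Lemma tv_le_sample_iid d' (X : measurableType d') (Q1 Q2 : X -> probability X R) dl n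
    (x1 : X) (K : seq X -> \bar R) :
  (forall U, measurable U -> measurable_fun setT (Q1 ^~ U)) ->
  (forall U, measurable U -> measurable_fun setT (Q2 ^~ U)) ->
  (forall x, tv_le (Q1 x) (Q2 x) dl) ->
  bounded_test (seq_param X n) (fun _ : unit => K) ->
  `|\int[Q1 x1]_x0 piid n (psample (Q1 x0)) K -
    \int[Q2 x1]_x0 piid n (psample (Q2 x0)) K| <= (n.+1%:R * dl)%:E.
Proof.
move=> mQ1 mQ2 htv hK.
have iid_bounded (Q : X -> probability X R) :
    (forall U, measurable U -> measurable_fun setT (Q ^~ U)) ->
    bounded_prog (seq_param X n) (fun x0 => piid n (psample (Q x0))).
  by move=> mQ; exact: bounded_prog_iid (bounded_prog_sample mQ).
have [m1 _ b1] := bounded_prog_sections (iid_bounded _ mQ1) hK.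
have [m2 _ b2] := bounded_prog_sections (iid_bounded _ mQ2) hK.
have hc x0 : `|piid n (psample (Q1 x0)) K - piid n (psample (Q2 x0)) K| <= (n%:R * dl)%:E.
  exact: tv_le_iid.
have := tv_le_integral_dist (htv x1) (m1 tt) (m2 tt) (b1 tt) (b2 tt) hc.
by rewrite -[n.+1%:R]natr1 mulrDl mul1r.
Qed.

End sampling.

Section kernel_distance.
Context {R : realType}.
Local Open Scope ereal_scope.

Lemma kdist_le d1 (Z : measurableType d1) d2 (Y : measurableType d2)
    (P1 P2 : Z -> prog R Y) (c : \bar R) :
  (forall z (f : Y -> R), measurable_fun setT f -> (forall y, `|f y| <= 1)%R ->
     P1 z (fun y => (f y)%:E) - P2 z (fun y => (f y)%:E) <= c) ->
  kdist P1 P2 <= c.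
Proof.
move=> H; apply: ge_ereal_sup => _ [z _ <-]; apply: ge_ereal_sup => _ [f [mf bf] <-].
exact: H.
Qed.

Lemma le_kdist d1 (Z : measurableType d1) d2 (Y : measurableType d2)
    (P1 P2 : Z -> prog R Y) z (f : Y -> R) :
  measurable_fun setT f -> (forall y, `|f y| <= 1)%R ->
  P1 z (fun y => (f y)%:E) - P2 z (fun y => (f y)%:E) <= kdist P1 P2.
Proof.
move=> mf bf; apply: (@le_trans _ _ (tv_dist (P1 z) (P2 z))).
  by apply: ereal_sup_ubound; exists f.
by apply: ereal_sup_ubound; exists z.
Qed.

Lemma kdist_kprog_fin_num d' (X : measurableType d') (Q1 Q2 : X -> probability X R) :
  kdist (kprog Q1) (kprog Q2) \is a fin_num.
Proof.
have ub : kdist (kprog Q1) (kprog Q2) <= 2%:E.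
  apply: kdist_le => z f mf bf.
  have mfE : measurable_fun setT (fun x => (f x)%:E) by apply/measurable_EFinP.
  have bfE x : `|(f x)%:E| <= 1%:E by rewrite abse_EFin lee_fin.
  have [_ b1] := bounded_integrable (Q1 z) mfE bfE.
  have [_ b2] := bounded_integrable (Q2 z) mfE bfE.
  have fa := abse_le_fin_num b1; have fb := abse_le_fin_num b2.
  move: b1 b2; rewrite /kprog /psample -(fineK fa) -(fineK fb) -EFinB !abse_EFin !lee_fin.
  by move=> /ler_normlP [? ?] /ler_normlP [? ?]; lra.
have lb : 0 <= kdist (kprog Q1) (kprog Q2).
  have b0 (x : X) : (`|0 : R| <= 1)%R by rewrite normr0.
  have := le_kdist (kprog Q1) (kprog Q2) point (measurable_cst (0 : R)%R) b0.
  by rewrite /kprog /psample !integral0_eq // subee.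
by move: lb ub; case: (kdist (kprog Q1) (kprog Q2)).
Qed.

Lemma tv_le_kprog d' (X : measurableType d') (Q1 Q2 : X -> probability X R) x :
  tv_le (Q1 x) (Q2 x) (fine (kdist (kprog Q1) (kprog Q2))).
Proof.
move=> f mf bf; rewrite fineK ?kdist_kprog_fin_num //.
exact: (le_kdist (kprog Q1) (kprog Q2) x mf bf).
Qed.

End kernel_distance.

(** * Measurability of the AI-CPF *)

Section utilities.
Context {R : realType}.

Lemma measurable_fun_nat_select d (W : measurableType d) d' (Y : measurableType d')
    (F : nat -> W -> Y) (u : W -> nat) :
  (forall i, measurable_fun setT (F i)) -> measurable_fun setT u ->
  measurable_fun setT (fun w => F (u w) w).
Proof.
move=> mF mu _ B mB; rewrite setTI.
have -> : (fun w => F (u w) w) @^-1` B = \bigcup_i (u @^-1` [set i] `&` F i @^-1` B).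
  by apply/seteqP; split=> [w hB|w [i _ [/= <-]]] //; exists (u w).
apply: bigcupT_measurable => i; apply: measurableI.
  by have := mu measurableT [set i] I; rewrite setTI.
by have := mF i measurableT B mB; rewrite setTI.
Qed.

Lemma measurable_nth_rcons A (x0 : A) d (W : measurableType d) d' (Y : measurableType d')
    (F : A -> Y) n (s : W -> seq A) (x : W -> A) j :
  (forall w, size (s w) = n) ->
  ((j < n)%N -> measurable_fun setT (fun w => F (nth x0 (s w) j))) ->
  measurable_fun setT (fun w => F (x w)) ->
  measurable_fun setT (fun w => F (nth x0 (rcons (s w) (x w)) j)).
Proof.
move=> hs ms mx.
rewrite (_ : (fun w => _) = fun w => if (j < n)%N then F (nth x0 (s w) j)
                                  else if j == n then F (x w) else F x0); last first.
  by apply/funext => w; rewrite nth_rcons hs; case: ifP => //; case: ifP.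
case: ltnP => hj; first exact: ms.
by case: eqP => _; [exact: mx | exact: measurable_cst].
Qed.

Lemma measurable_inv : measurable_fun setT (@GRing.inv R).
Proof.
rewrite -(setUCr [set 0%R]) setUC; apply/measurable_funU => //; first exact: measurableC.
split.
  apply: open_continuous_measurable_fun.
    exact/closed_openC/accessible_closed_set1/hausdorff_accessible.
  by move=> x; rewrite inE /= => /eqP; exact: inv_continuous.
move=> _ B mB.
rewrite (_ : _ `&` _ = [set 0%R] `&` (fun _ : R => 0%R) @^-1` B).
  by apply: measurableI => //; rewrite preimage_cst; case: ifP.
by apply/seteqP; split=> x [/= -> hb]; split => //=; rewrite ?invr0 in hb *.
Qed.

Lemma measurable_fun_div d (W : measurableType d) (f g : W -> R) :
  measurable_fun setT f -> measurable_fun setT g ->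
  measurable_fun setT (fun w => f w / g w).
Proof.
by move=> mf mg; apply: measurable_funM => //; exact: measurableT_comp measurable_inv mg.
Qed.

(* Only [<= 1]: if all the [u i] vanish, the junk value [x / 0 = 0] makes every
   normalised weight zero. *)
Lemma normalized_weights n (u : nat -> R) : (forall i, 0 <= u i) ->
  (forall i, 0 <= u i / \sum_(0 <= j < n) u j) /\
  \sum_(0 <= i < n) u i / \sum_(0 <= j < n) u j <= 1.
Proof.
move=> u0; split=> [i|]; first by apply: divr_ge0 => //; exact: sumr_ge0.
rewrite -mulr_suml; have [->|hS] := eqVneq (\sum_(0 <= j < n) u j) 0.
  by rewrite invr0 mulr0 ler01.
by rewrite mulfV.
Qed.

End utilities.

Section aicpf.
Context {R : realType} {d : measure_display} {X : measurableType d}.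
Variables (N T : nat) (M : nat -> X -> probability X R) (G : nat -> seq X -> R).
Hypothesis hT : (0 < T)%N.
Hypothesis hM : forall k, (1 < k <= T)%N -> markov_kernel (M k).
Hypothesis hGm : forall k, (0 < k <= T)%N ->
  measurable_fun setT (fun p : k.-tuple X => G k p).
Hypothesis hGpos : forall k (p : k.-tuple X), (0 < k <= T)%N -> 0 < G k p.

Local Notation state := (@state d X).
Local Notation out := (@out R d X N T).

Lemma measurable_G k dW (W : measurableType dW) (P : W -> seq X) :
  (0 < k <= T)%N -> (forall w, size (P w) = k) ->
  (forall l, measurable_fun setT (fun w => nth point (P w) l)) ->
  measurable_fun setT (fun w => G k (P w)).
Proof.
move=> hk hs hm; have hsz w : size (P w) == k by rewrite hs.
have -> : (fun w => G k (P w)) = (fun p : k.-tuple X => G k p) \o (fun w => Tuple (hsz w)).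
  by [].
apply: measurableT_comp (hGm hk) _; apply/measurable_fun_tnthP => i.
by apply: eq_measurable_fun (hm i) => w _ /=; rewrite (tnth_nth point).
Qed.

Lemma G_gt0 k (s : seq X) : (0 < k <= T)%N -> size s = k -> 0 < G k s.
Proof.
move=> hk hs; have hs' : size s == k by rewrite hs.
exact: hGpos (Tuple hs') hk.
Qed.

Lemma wts_bounds k (P : nat -> seq X) : (0 < k <= T)%N -> (forall i, size (P i) = k) ->
  (forall i, 0 <= wts N G k P i) /\ \sum_(0 <= i < N) wts N G k P i <= 1.
Proof. by move=> hk hs; apply: normalized_weights => i; exact/ltW/G_gt0. Qed.

Lemma measurable_wts k dW (W : measurableType dW) (P : W -> nat -> seq X) :
  (0 < k <= T)%N -> (forall w i, size (P w i) = k) ->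
  (forall i l, measurable_fun setT (fun w => nth point (P w i) l)) ->
  forall i, measurable_fun setT (fun w => wts N G k (P w) i).
Proof.
move=> hk hs hm i; apply: measurable_fun_div; first exact: measurable_G.
by apply: measurable_sum => j; exact: measurable_G.
Qed.

Record state_spec k dW (W : measurableType dW) (u : W -> state) : Prop := StateSpec {
  size_particles : forall w, size (u w).1.1 = k;
  size_ancestors : forall w, size (u w).1.2 = k.-1;
  size_paths : forall w, size (u w).2 = k;
  measurable_particles : forall j i,
    measurable_fun setT (fun w => nth nullX (u w).1.1 j i);
  measurable_ancestors : forall j i,
    measurable_fun setT (fun w => nth (fun _ => 0%N) (u w).1.2 j i);
  size_path : forall j i w, (j < k)%N -> size (nth nullP (u w).2 j i) = j.+1;
  measurable_path : forall j i l,
    measurable_fun setT (fun w => nth point (nth nullP (u w).2 j i) l) }.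

Definition state_param k : param_pred state := @state_spec k.

Lemma state_param_closed k : precomp_closed (state_param k).
Proof.
move=> dW W dW' W' h u mh [h1 h2 h3 h4 h5 h6 h7].
split=> [w|w|w|j i|j i|j i w|j i l] /=.
- exact: h1.
- exact: h2.
- exact: h3.
- exact: measurableT_comp (h4 j i) mh.
- exact: measurableT_comp (h5 j i) mh.
- exact: h6.
- exact: measurableT_comp (h7 j i l) mh.
Qed.

Lemma last_paths k dW (W : measurableType dW) (u : W -> state) : state_param k u ->
  forall w, last nullP (u w).2 = nth nullP (u w).2 k.-1.
Proof. by case=> _ _ h3 _ _ _ _ w; rewrite -nth_last h3. Qed.

Lemma last_particles k dW (W : measurableType dW) (u : W -> state) : state_param k u ->
  forall w, last nullX (u w).1.1 = nth nullX (u w).1.1 k.-1.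
Proof. by case=> h1 _ _ _ _ _ _ w; rewrite -nth_last h1. Qed.

Lemma measurable_last_wts k dW (W : measurableType dW) (u : W -> state) :
  (0 < k <= T)%N -> state_param k u ->
  [/\ forall i, measurable_fun setT (fun w => wts N G k (last nullP (u w).2) i),
      forall w i, 0 <= wts N G k (last nullP (u w).2) i &
      forall w, \sum_(0 <= i < N) wts N G k (last nullP (u w).2) i <= 1].
Proof.
move=> hk hu; have hl := last_paths hu; case: hu => _ _ _ _ _ h6 h7.
have hs w i : size (last nullP (u w).2 i) = k.
  by rewrite hl h6 ?prednK ?ltn_predL //; case/andP: hk.
split=> [i|w i|w]; [|exact: (wts_bounds hk (hs w)).1|exact: (wts_bounds hk (hs w)).2].
apply: measurable_wts hs _ i => // i0 l.
by apply: eq_measurable_fun (h7 k.-1 i0 l) => w _; rewrite hl.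
Qed.

Definition new_ancestors (dr : seq (nat * X)) (i : nat) : nat :=
  if i == 0%N then 0%N else (nth (0%N, point) dr i.-1).1.

Definition new_particles (xstar : seq X) k (dr : seq (nat * X)) (i : nat) : X :=
  if i == 0%N then nth point xstar k else (nth (0%N, point) dr i.-1).2.

Definition extend_state xstar k (st : state) (dr : seq (nat * X)) : state :=
  (rcons st.1.1 (new_particles xstar k dr), rcons st.1.2 (new_ancestors dr),
   rcons st.2 (fun i => rcons (last nullP st.2 (new_ancestors dr i))
                             (new_particles xstar k dr i))).

Definition draw_offspring k (st : state) : prog R (nat * X) :=
  pbind (pcateg N (wts N G k (last nullP st.2))) (fun a =>
    pbind (psample (M k.+1 (last nullX st.1.1 a))) (fun x => pret (a, x))).

Lemma fstepE xstar k st : fstep N M G xstar k st =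
  pbind (piid N.-1 (draw_offspring k st)) (fun dr => pret (extend_state xstar k st dr)).
Proof. by case: st => [[]]. Qed.

Lemma measurable_new_ancestors dW (W : measurableType dW) n (dr : W -> seq (nat * X)) :
  seq_param (nat * X)%type n _ W dr ->
  forall i, measurable_fun setT (fun w => new_ancestors (dr w) i).
Proof.
move=> [_ hm] [|i]; first exact: measurable_cst.
exact: measurableT_comp measurable_fst (hm _ _).
Qed.

Lemma measurable_new_particles dW (W : measurableType dW) n xstar k
    (dr : W -> seq (nat * X)) :
  seq_param (nat * X)%type n _ W dr ->
  forall i, measurable_fun setT (fun w => new_particles xstar k (dr w) i).
Proof.
move=> [_ hm] [|i]; first exact: measurable_cst.
exact: measurableT_comp measurable_snd (hm _ _).
Qed.

Lemma state_param_extend xstar k dW (W : measurableType dW) (u : W -> state)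
    (dr : W -> seq (nat * X)) :
  (0 < k)%N -> state_param k u -> seq_param (nat * X)%type N.-1 _ W dr ->
  state_param k.+1 (fun w => extend_state xstar k (u w) (dr w)).
Proof.
move=> hk hu hdr; have hl := last_paths hu.
case: hu => h1 h2 h3 h4 h5 h6 h7.
have hA := measurable_new_ancestors hdr; have hX := measurable_new_particles xstar k hdr.
split=> /= [w|w|w|j i|j i|j i w hj|j i l].
- by rewrite size_rcons h1.
- by rewrite size_rcons h2 prednK.
- by rewrite size_rcons h3.
- by apply: (measurable_nth_rcons (F := fun f => f i) h1) => // _; exact: h4.
- by apply: (measurable_nth_rcons (F := fun f => f i) h2) => // _; exact: h5.
- rewrite nth_rcons h3; case: ltnP => [|hkj]; first exact: h6.
  have -> : j = k by apply/eqP; rewrite eqn_leq hkj -ltnS hj.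
  by rewrite eqxx size_rcons hl h6 ?prednK // ltn_predL.
apply: (measurable_nth_rcons (F := fun P => nth point (P i) l) h3) => [_|].
  exact: h7.
have hs w : size (last nullP (u w).2 (new_ancestors (dr w) i)) = k.
  by rewrite hl h6 ?prednK // ltn_predL.
apply: (measurable_nth_rcons (F := id) hs) => [_|]; last exact: hX.
apply: (eq_measurable_fun
  (fun w => nth point (nth nullP (u w).2 k.-1 (new_ancestors (dr w) i)) l)).
  by move=> w _; rewrite hl.
apply: (measurable_fun_nat_select
  (F := fun a w => nth point (nth nullP (u w).2 k.-1 a) l)) (hA i) => a.
exact: h7.
Qed.

Lemma fstep_bounded xstar k dW (W : measurableType dW) (u : W -> state) :
  (0 < k)%N -> (k < T)%N -> state_param k u ->
  bounded_prog (state_param k.+1) (fun w => fstep N M G xstar k (u w)).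
Proof.
move=> hk1 hk2 hu; have hkT : (0 < k <= T)%N by rewrite hk1 ltnW.
have [mW W0 W1] := measurable_last_wts hkT hu.
have hlx := last_particles hu; have h4 := measurable_particles hu.
rewrite (_ : (fun w => _) = fun w => pbind (piid N.-1 (draw_offspring k (u w)))
    (fun dr => pret (extend_state xstar k (u w) dr))); last first.
  by apply/funext => w; rewrite fstepE.
apply: (bounded_prog_bind (P := seq_param (nat * X)%type N.-1)).
  apply: (bounded_prog_iid (p := fun w => draw_offspring k (u w))).
  apply: (bounded_prog_bind (bounded_prog_categ mW W0 W1)) => dW' W' g a mg ma.
  apply: bounded_prog_bind.
    apply: bounded_prog_sample => U mU.
    have hMk : (1 < k.+1 <= T)%N by rewrite ltnS hk1 hk2.
    apply: measurableT_comp (hM hMk mU) _.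
    apply: (eq_measurable_fun (fun w' => nth nullX (u (g w')).1.1 k.-1 (a w'))).
      by move=> w' _; rewrite hlx.
    apply: (measurable_fun_nat_select
      (F := fun i w' => nth nullX (u (g w')).1.1 k.-1 i)) ma => i.
    exact: measurableT_comp (h4 _ _) mg.
  move=> dW'' W'' g' x mg' mx.
  apply: (bounded_prog_ret (@measurable_param_closed _ (nat * X)%type)).
  exact: measurable_fun_pair (measurableT_comp ma mg') mx.
move=> dW' W' g dr mg hdr.
apply: (bounded_prog_ret (@state_param_closed k.+1)).
by apply: state_param_extend hdr => //; exact: state_param_closed hu.
Qed.

Lemma fwd_bounded xstar m dW (W : measurableType dW) (X1 : W -> nat -> X) :
  (m < T)%N -> (forall i, measurable_fun setT (fun w => X1 w i)) ->
  bounded_prog (state_param m.+1) (fun w => fwd N M G xstar (X1 w) m).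
Proof.
move=> + mX1; elim: m => [|m IH] hm.
  apply: (bounded_prog_ret (@state_param_closed 1)).
  split=> // [[|j] i|j i|[]//|[|j] i [|l]] /=; try exact: measurable_cst.
  - exact: mX1.
  - exact: mX1.
apply: (bounded_prog_bind (IH (ltnW hm))) => dW' W' g u mg hu.
exact: fstep_bounded.
Qed.

Lemma measurable_mk_out dW (W : measurableType dW) (hx : W -> seq (nat -> X))
    (Bs : W -> seq nat) (V : W -> nat -> R) :
  (forall j i, measurable_fun setT (fun w => nth nullX (hx w) j i)) ->
  (forall j, measurable_fun setT (fun w => nth 0%N (Bs w) j)) ->
  (forall i, measurable_fun setT (fun w => V w i)) ->
  measurable_fun setT (fun w => mk_out N T (hx w) (Bs w) (V w)).
Proof.
move=> mx mB mV; apply: measurable_fun_pair; last apply: measurable_fun_pair.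
- apply/measurable_fun_tnthP => i.
  apply: (eq_measurable_fun (fun w => nth nullX (hx w) i (nth 0%N (Bs w) i))).
    by move=> w _ /=; rewrite tnth_mktuple.
  by apply: (measurable_fun_nat_select (F := fun a w => nth nullX (hx w) i a)) (mB i).
- exact: mB 0%N.
apply: measurable_fun_pair; apply/measurable_fun_tnthP => i.
  by apply: eq_measurable_fun (mV i) => w _ /=; rewrite tnth_mktuple.
by apply: eq_measurable_fun (mx 0%N i) => w _ /=; rewrite tnth_mktuple.
Qed.

Lemma size_trace r b : size (trace r b) = (size r).+1.
Proof. by elim: r b => //= a r IH b; rewrite size_rcons IH. Qed.

Lemma measurable_trace n dW (W : measurableType dW) (rha : W -> seq (nat -> nat))
    (b : W -> nat) :
  (forall w, size (rha w) = n) ->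
  (forall j i, measurable_fun setT (fun w => nth (fun _ => 0%N) (rha w) j i)) ->
  measurable_fun setT b ->
  forall i, measurable_fun setT (fun w => nth 0%N (trace (rha w) (b w)) i).
Proof.
elim: n dW W rha b => [|n IH] dW W rha b hs hm mb i.
  apply: (eq_measurable_fun (fun w => nth 0%N [:: b w] i)).
    by move=> w _; rewrite (size0nil (hs w)).
  by case: i => [|i] /=; [exact: mb | exact: measurable_cst].
pose A0 w := nth (fun _ => 0%N) (rha w) 0.
apply: (eq_measurable_fun
  (fun w => nth 0%N (rcons (trace (behead (rha w)) (A0 w (b w))) (b w)) i)).
  by move=> w _; rewrite /A0; move: (hs w); case: (rha w).
have hsz w : size (trace (behead (rha w)) (A0 w (b w))) = n.+1.
  by rewrite size_trace size_behead hs.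
apply: (measurable_nth_rcons (F := id) hsz) => // _.
apply: IH => [w|j i0|]; first by rewrite size_behead hs.
  by apply: eq_measurable_fun (hm j.+1 i0) => w _; rewrite nth_behead.
by apply: (measurable_fun_nat_select (F := fun a w => A0 w a)) mb => a; exact: hm.
Qed.

Lemma measurable_nth_rev n dW (W : measurableType dW) (ha : W -> seq (nat -> nat)) :
  (forall w, size (ha w) = n) ->
  (forall j i, measurable_fun setT (fun w => nth (fun _ => 0%N) (ha w) j i)) ->
  forall j i, measurable_fun setT (fun w => nth (fun _ => 0%N) (rev (ha w)) j i).
Proof.
move=> hs hm j i; case: (ltnP j n) => hj.
  apply: (eq_measurable_fun (fun w => nth (fun _ => 0%N) (ha w) (n - j.+1) i)) (hm _ _).
  by move=> w _; rewrite nth_rev hs.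
apply: (eq_measurable_fun (fun=> 0%N)); last exact: measurable_cst.
by move=> w _; rewrite nth_default // size_rev hs.
Qed.

Definition bounded_selection (sel : state -> prog R out) :=
  forall dW (W : measurableType dW) (u : W -> state),
    state_param T u -> bounded_prog (measurable_param out) (fun w => sel (u w)).

Lemma sel_at_bounded : bounded_selection (sel_at G).
Proof.
move=> dW W u hu; have hTT : (0 < T <= T)%N by rewrite hT leqnn.
have [mW W0 W1] := measurable_last_wts hTT hu.
case: (hu) => h1 h2 h3 h4 h5 h6 h7.
rewrite (_ : (fun w => _) = fun w =>
    pbind (pcateg N (wts N G T (last nullP (u w).2))) (fun bT =>
      pret (mk_out N T (u w).1.1 (trace (rev (u w).1.2) bT)
                   (wts N G 1 (head nullP (u w).2))))); last first.
  by apply/funext => w; case: (u w) => [[]].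
apply: (bounded_prog_bind (bounded_prog_categ mW W0 W1)) => dW' W' g b mg mb.
apply: (bounded_prog_ret (@measurable_param_closed _ out)).
apply: measurable_mk_out => [j i|j|i].
- exact: measurableT_comp (h4 j i) mg.
- apply: (measurable_trace (n := T.-1) _ _ mb) => [w|]; first by rewrite size_rev h2.
  apply: (measurable_nth_rev (n := T.-1)) => // j1 i1.
  exact: measurableT_comp (h5 j1 i1) mg.
apply: measurable_wts => [|w i0|i0 l]; first by rewrite hT.
  by rewrite -nth0 h6.
by apply: eq_measurable_fun (measurableT_comp (h7 0 i0 l) mg) => w _; rewrite /= nth0.
Qed.

Variables (m g : nat -> X -> X -> R).
Hypothesis hmm : forall k, (1 < k <= T)%N ->
  measurable_fun setT (fun xy : X * X => m k xy.1 xy.2).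
Hypothesis hm0 : forall k x y, (1 < k <= T)%N -> 0 <= m k x y.
Hypothesis hgm : forall k, (1 < k <= T)%N ->
  measurable_fun setT (fun xy : X * X => g k xy.1 xy.2).
Hypothesis hGg : forall k (p : k.-tuple X), (1 < k <= T)%N ->
  G k p = g k (nth point p k.-2) (nth point p k.-1).

Lemma g_gt0 k x y : (1 < k <= T)%N -> 0 < g k x y.
Proof.
case: k => [|[|k]] // hk.
have hs : size (nseq k x ++ [:: x; y]) == k.+2 by rewrite size_cat size_nseq addn2.
have := hGg (Tuple hs) hk; rewrite /= !nth_cat size_nseq ltnn subnn ltnNge leqnSn /=.
rewrite subSnn /= => <-; apply: G_gt0 (eqP hs).
by case/andP: hk => _ ->.
Qed.

Definition bwd_weight (st : state) k bn j : R :=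
  wts N G k (nth nullP st.2 k.-1) j
  * m k.+1 (nth nullX st.1.1 k.-1 j) (nth nullX st.1.1 k bn)
  * g k.+1 (nth nullX st.1.1 k.-1 j) (nth nullX st.1.1 k bn).

Lemma vwtsE st k bn i :
  vwts N G m g st k bn i = bwd_weight st k bn i / \sum_(0 <= j < N) bwd_weight st k bn j.
Proof. by case: st => [[]]. Qed.

Lemma measurable_vwts k dW (W : measurableType dW) (st : W -> state) (bn : W -> nat) :
  (0 < k)%N -> (k < T)%N -> state_param T st -> measurable_fun setT bn ->
  [/\ forall i, measurable_fun setT (fun w => vwts N G m g (st w) k (bn w) i),
      forall w i, 0 <= vwts N G m g (st w) k (bn w) i &
      forall w, \sum_(0 <= i < N) vwts N G m g (st w) k (bn w) i <= 1].
Proof.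
move=> hk1 hk2 [_ _ _ h4 _ h6 h7] mbn.
have hkT : (0 < k <= T)%N by rewrite hk1 ltnW.
have hk1T : (1 < k.+1 <= T)%N by rewrite ltnS hk1 hk2.
have hk' : (k.-1 < T)%N by rewrite prednK // ltnW.
have hsz w j : size (nth nullP (st w).2 k.-1 j) = k by rewrite h6 // prednK.
have u0 w j : 0 <= bwd_weight (st w) k (bn w) j.
  apply: mulr_ge0; first apply: mulr_ge0.
  - exact: (wts_bounds hkT (hsz w)).1.
  - exact: hm0.
  - exact/ltW/g_gt0.
have mu j : measurable_fun setT (fun w => bwd_weight (st w) k (bn w) j).
  have mX : measurable_fun setT
      (fun w => (nth nullX (st w).1.1 k.-1 j, nth nullX (st w).1.1 k (bn w))).
    apply: measurable_fun_pair; first exact: h4.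
    by apply: (measurable_fun_nat_select (F := fun a w => nth nullX (st w).1.1 k a)).
  apply: measurable_funM; first apply: measurable_funM.
  - by apply: (measurable_wts hkT) => // i l; exact: h7.
  - exact: measurableT_comp (hmm hk1T) mX.
  - exact: measurableT_comp (hgm hk1T) mX.
split=> [i|w i|w].
- under eq_fun do rewrite vwtsE.
  by apply: measurable_fun_div => //; apply: measurable_sum.
- by rewrite vwtsE; exact: (normalized_weights N (u0 w)).1.
- under eq_bigr do rewrite vwtsE.
  exact: (normalized_weights N (u0 w)).2.
Qed.

Record bwd_spec j dW (W : measurableType dW) (r : W -> seq (nat * (nat -> R))) : Prop :=
  BwdSpec {
  size_bwd : forall w, size (r w) = j;
  measurable_bwd_index : forall l,
    measurable_fun setT (fun w => (nth (0%N, fun _ => 0) (r w) l).1);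
  measurable_bwd_weights : forall l i,
    measurable_fun setT (fun w => (nth (0%N, fun _ => 0) (r w) l).2 i) }.

Definition bwd_param j : param_pred (seq (nat * (nat -> R))) := @bwd_spec j.

Lemma bwd_param_closed j : precomp_closed (bwd_param j).
Proof.
move=> dW W dW' W' h r mh [h1 h2 h3]; split=> [w|l|l i].
- exact: h1.
- exact: measurableT_comp (h2 l) mh.
- exact: measurableT_comp (h3 l i) mh.
Qed.

Lemma bwd_bounded j dW (W : measurableType dW) (st : W -> state) (bn : W -> nat) :
  (j < T)%N -> state_param T st -> measurable_fun setT bn ->
  bounded_prog (bwd_param j) (fun w => bwd N G m g (st w) j (bn w)).
Proof.
elim: j dW W st bn => [|j IH] dW W st bn hj hst mbn.
  apply: (bounded_prog_ret (@bwd_param_closed 0)).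
  by split=> // [l|l i]; exact: measurable_cst.
have [mV V0 V1] := measurable_vwts (ltn0Sn j) hj hst mbn.
apply: (bounded_prog_bind (bounded_prog_categ mV V0 V1)) => dW' W' g' b mg' mb.
apply: (bounded_prog_bind (P := bwd_param j)).
  exact: IH (ltnW hj) (state_param_closed mg' hst) mb.
move=> dW'' W'' g'' r mg'' [hs h1 h2].
apply: (bounded_prog_ret (@bwd_param_closed j.+1)).
split=> [w|l|l i] /=; first by rewrite size_rcons hs.
  by apply: (measurable_nth_rcons (F := fst) hs) => //; exact: measurableT_comp mb mg''.
apply: (measurable_nth_rcons (F := fun p => p.2 i) hs) => //.
exact: measurableT_comp (measurableT_comp (mV i) mg') mg''.
Qed.

Lemma sel_bs_bounded : bounded_selection (sel_bs G m g).
Proof.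
move=> dW W u hu; have hTT : (0 < T <= T)%N by rewrite hT leqnn.
have [mW W0 W1] := measurable_last_wts hTT hu.
have h4 := measurable_particles hu.
pose WT w := wts N G T (last nullP (u w).2).
rewrite (_ : (fun w => _) = fun w =>
  pbind (pcateg N (WT w)) (fun bT =>
   pbind (bwd N G m g (u w) T.-1 bT) (fun r =>
     pret (mk_out N T (u w).1.1 (map fst (rcons r (bT, WT w)))
                  (head (0%N, WT w) (rcons r (bT, WT w))).2)))); last first.
  by apply/funext => w; rewrite /WT; case: (u w) => [[]].
apply: (bounded_prog_bind (bounded_prog_categ mW W0 W1)) => dW' W' g' b mg' mb.
apply: (bounded_prog_bind (P := bwd_param T.-1)).
  by apply: bwd_bounded (state_param_closed mg' hu) mb; rewrite ltn_predL.
move=> dW'' W'' g'' r mg'' [hs h1 h2].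
apply: (bounded_prog_ret (@measurable_param_closed _ out)).
apply: measurable_mk_out => [j i|l|i].
- exact: measurableT_comp (measurableT_comp (h4 j i) mg') mg''.
- apply: (eq_measurable_fun (fun w => nth 0%N (rcons (map fst (r w)) (b (g'' w))) l)).
    by move=> w _; rewrite map_rcons.
  apply: (measurable_nth_rcons (F := id)) => [w|hl|]; first by rewrite size_map hs.
    apply: eq_measurable_fun (h1 l) => w _.
    by rewrite (nth_map (0%N, fun _ => 0)) ?hs.
  exact: measurableT_comp mb mg''.
apply: (eq_measurable_fun
  (fun w => (nth (0%N, fun _ => 0) (rcons (r w) (b (g'' w), WT (g' (g'' w)))) 0).2 i)).
  by move=> w _; case: (r w).
apply: (measurable_nth_rcons (F := fun p => p.2 i) hs) => //.
exact: measurableT_comp (measurableT_comp (mW i) mg') mg''.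
Qed.

Definition initial_particles (xstar xs : seq X) (i : nat) : X :=
  if i == 0%N then nth point xstar 0 else nth point xs i.-1.

Lemma aicpf_continuation_bounded xstar (sel : state -> prog R out) (k : out -> \bar R) :
  bounded_selection sel -> measurable_fun setT k -> (forall o, `|k o| <= 1)%E ->
  bounded_test (seq_param X N.-1) (fun _ : unit => fun xs =>
    fwd N M G xstar (initial_particles xstar xs) T.-1 (fun st => sel st k)).
Proof.
move=> hsel mk bk dW W g0 xs mg0 [_ hm].
have mX1 i : measurable_fun setT (fun w => initial_particles xstar (xs w) i).
  by case: i => [|i]; [exact: measurable_cst | exact: hm].
have hT' : (T.-1 < T)%N by rewrite ltn_predL.
have hfwd := fwd_bounded xstar hT' mX1; rewrite prednK // in hfwd.
have hk : bounded_test (measurable_param out) (fun _ : unit => k).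
  by move=> dW' W' g' u' _ mu'; split=> [|w]; [exact: measurableT_comp mk mu' | exact: bk].
have hsel' : bounded_cont (state_param T) (measurable_param out) (fun _ : W => sel).
  by move=> dW' W' h u _ hu; exact: hsel.
have [m1 _ b1] := bounded_prog_sections (bounded_prog_bind hfwd hsel') hk.
by split=> [|w]; [exact: (m1 tt) | exact: (b1 tt w)].
Qed.

Hypothesis hN : (0 < N)%N.

Lemma aicpf_dist_le bs (Q1 Q2 : X -> probability X R) dl xstar (k : out -> \bar R) :
  markov_kernel Q1 -> markov_kernel Q2 -> (forall x, tv_le (Q1 x) (Q2 x) dl) ->
  bounded_selection (fun st => if bs then sel_bs G m g st else sel_at G st) ->
  measurable_fun setT k -> (forall o, `|k o| <= 1)%E ->
  (`|aicpf (N := N) (T := T) M G m g bs Q1 xstar k -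
      aicpf (N := N) (T := T) M G m g bs Q2 xstar k|
     <= (N%:R * dl)%:E)%E.
Proof.
move=> mQ1 mQ2 htv hsel mk bk.
have := tv_le_sample_iid (nth point xstar 0) mQ1 mQ2 htv
  (aicpf_continuation_bounded xstar hsel mk bk).
by rewrite prednK.
Qed.

Lemma kdist_P_aicpf_le bs (Q1 Q2 : X -> probability X R) :
  markov_kernel Q1 -> markov_kernel Q2 ->
  bounded_selection (fun st => if bs then sel_bs G m g st else sel_at G st) ->
  (kdist (P_aicpf N T M G m g bs Q1) (P_aicpf N T M G m g bs Q2)
     <= N%:R%:E * kdist (kprog Q1) (kprog Q2))%E.
Proof.
move=> mQ1 mQ2 hsel; rewrite -(fineK (kdist_kprog_fin_num Q1 Q2)) -EFinM.
apply: kdist_le => xstar f mf bf; apply: le_trans (lee_abs _) _.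
have mk : measurable_fun setT (fun o : out => (f o.1)%:E).
  by apply/measurable_EFinP; exact: measurableT_comp mf measurable_fst.
have bk (o : out) : (`|(f o.1)%:E| <= 1)%E by rewrite abse_EFin lee_fin.
exact (aicpf_dist_le xstar mQ1 mQ2 (tv_le_kprog Q1 Q2) hsel mk bk).
Qed.

Lemma kdist_Ptilde_aicpf_le (Q1 Q2 : X -> probability X R) :
  markov_kernel Q1 -> markov_kernel Q2 -> bounded_selection (sel_bs G m g) ->
  (kdist (Ptilde_aicpf N T M G m g Q1) (Ptilde_aicpf N T M G m g Q2)
     <= N%:R%:E * kdist (kprog Q1) (kprog Q2))%E.
Proof.
move=> mQ1 mQ2 hsel; rewrite -(fineK (kdist_kprog_fin_num Q1 Q2)) -EFinM.
apply: kdist_le => z f mf bf; apply: le_trans (lee_abs _) _.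
have mk : measurable_fun setT (fun o : out => (f o)%:E) by apply/measurable_EFinP.
have bk (o : out) : (`|(f o)%:E| <= 1)%E by rewrite abse_EFin lee_fin.
exact (aicpf_dist_le (bs := true) z.1 mQ1 mQ2 (tv_le_kprog Q1 Q2) hsel mk bk).
Qed.

End aicpf.

Theorem lemma1 (R : realType) (d : measure_display) (X : measurableType d)
  (N T : nat) (hN : (0 < N)%N) (hT : (0 < T)%N)
  (M : nat -> X -> probability X R) (G : nat -> seq X -> R)
  (hM : forall k, (1 < k <= T)%N -> markov_kernel (M k))
  (hGm : forall k, (0 < k <= T)%N -> measurable_fun setT (fun p : k.-tuple X => G k p))
  (hGpos : forall k (p : k.-tuple X), (0 < k <= T)%N -> 0 < G k p)
  (Q1 Q2 : X -> probability X R) (hQ1 : markov_kernel Q1) (hQ2 : markov_kernel Q2) :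
  (* ancestor tracing *)
  (kdist (P_aicpf N T M G (fun _ _ _ => 0%R) (fun _ _ _ => 0%R) false Q1)
         (P_aicpf N T M G (fun _ _ _ => 0%R) (fun _ _ _ => 0%R) false Q2)
     <= N%:R%:E * kdist (kprog Q1) (kprog Q2))%E /\
  (* backward sampling *)
  (forall (nu : {measure set X -> \bar R}) (m g : nat -> X -> X -> R),
     sigma_finite setT nu ->
     (forall k, (1 < k <= T)%N -> measurable_fun setT (fun xy : X * X => m k xy.1 xy.2)) ->
     (forall k x y, (1 < k <= T)%N -> 0 <= m k x y) ->
     (forall k x A, (1 < k <= T)%N -> measurable A ->
        M k x A = (\int[nu]_(y in A) (m k x y)%:E)%E) ->
     (forall k, (1 < k <= T)%N -> measurable_fun setT (fun xy : X * X => g k xy.1 xy.2)) ->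
     (forall k (p : k.-tuple X), (1 < k <= T)%N ->
        G k p = g k (nth point p k.-2) (nth point p k.-1)) ->
     (kdist (P_aicpf N T M G m g true Q1) (P_aicpf N T M G m g true Q2)
        <= N%:R%:E * kdist (kprog Q1) (kprog Q2))%E /\
     (kdist (Ptilde_aicpf N T M G m g Q1) (Ptilde_aicpf N T M G m g Q2)
        <= N%:R%:E * kdist (kprog Q1) (kprog Q2))%E).
Proof.
split.
  apply: (kdist_P_aicpf_le (bs := false) hT hM hGm hGpos hN hQ1 hQ2).
  exact: (sel_at_bounded (N := N) hT hGm hGpos).
move=> nu m g _ hmm hm0 _ hgm hGg.
have hsel := sel_bs_bounded (N := N) hT hGm hGpos hmm hm0 hgm hGg.
split; first by apply: (kdist_P_aicpf_le (bs := true) hT hM hGm hGpos hN hQ1 hQ2).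
by apply: (kdist_Ptilde_aicpf_le hT hM hGm hGpos hN hQ1 hQ2).
Qed.
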